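(* Let $a \in \mathbb{C}$ and $w \in \mathbb{C}\setminus\{0\}$. For $\tau > 0$ small enough that $0 < \tau |w| e^{\tau|a|} < 1/e$, define $$\Sigma_0^+(\tau) := \tfrac{1}{\tau}W_0\big(\tau|w|e^{-\tau|a|}\big) + |a|,\quad \Sigma_0^-(\tau) := \tfrac{1}{\tau}W_0\big(-\tau|w|e^{\tau|a|}\big) - |a|,\quad \Sigma_{-1}(\tau) := \tfrac{1}{\tau}W_{-1}\big(-\tau|w|e^{\tau|a|}\big) - |a|.$$ Then for every sufficiently small $\tau > 0$, every root $z$ of $z + a - we^{-\tau z} = 0$ satisfies $$\operatorname{Re}(z) \le \Sigma_{-1}(\tau) \quad\text{or}\quad \Sigma_0^-(\tau) \le \operatorname{Re}(z) \le \Sigma_0^+(\tau),$$ and moreover $\lim_{\tau\downarrow 0}\Sigma_0^\pm(\tau) = \pm(|a|+|w|)$ and $\lim_{\tau\downarrow 0}\Sigma_{-1}(\tau) = -\infty$.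
   Context: $W_0 : [-1/e,\infty) \to [-1,\infty)$ is the inverse of the increasing function $x \mapsto xe^x$ on $[-1,\infty)$, and $W_{-1} : [-1/e, 0) \to (-\infty,-1]$ is the inverse of the decreasing function $x\mapsto xe^x$ on $(-\infty,-1]$ (the two real branches of the Lambert $W$ function). *)

From Stdlib Require Import Reals ClassicalEpsilon.
From Coquelicot Require Import Coquelicot.
Open Scope R_scope.

Definition cexp (z : C) : C :=
  (exp (Re z) * cos (Im z), exp (Re z) * sin (Im z)).

(* Principal branch W_0 : [-1/e, oo) -> [-1, oo): inverse of x e^x on [-1,oo). *)
Definition W0 (x : R) : R :=
  epsilon (inhabits 0) (fun y => -1 <= y /\ y * exp y = x).

(* Lower branch W_{-1} : [-1/e, 0) -> (-oo, -1]: inverse of x e^x on (-oo,-1]. *)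
Definition Wm1 (x : R) : R :=
  epsilon (inhabits 0) (fun y => y <= -1 /\ y * exp y = x).

Definition Sigma0p (a w : C) (tau : R) : R :=
  / tau * W0 (tau * Cmod w * exp (- tau * Cmod a)) + Cmod a.
Definition Sigma0m (a w : C) (tau : R) : R :=
  / tau * W0 (- tau * Cmod w * exp (tau * Cmod a)) - Cmod a.
Definition Sigmam1 (a w : C) (tau : R) : R :=
  / tau * Wm1 (- tau * Cmod w * exp (tau * Cmod a)) - Cmod a.

From Stdlib Require Import Reals Lra ClassicalEpsilon.
From Coquelicot Require Import Coquelicot.
Open Scope R_scope.

(* Put X = Re z, A = |a|, B = |w|.  Taking moduli in z + a = w e^(-tau z)
   gives |X + Re a| <= B e^(-tau X), hence (X - A) e^(tau X) <= B and
   -(X + A) e^(tau X) <= B.  With f(y) = y e^y these become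
     f(tau (X - A)) <= tau B e^(-tau A)   and   -tau B e^(tau A) <= f(tau (X + A)).
   Since f increases on [-1, oo) and decreases on (-oo, -1], the first
   inequality puts tau (X - A) below W_0 of the right-hand side, and the
   second puts tau (X + A) outside the interval (W_(-1), W_0) of the
   left-hand side; dividing by tau gives the localisation.
   For the limits, W_0(x) = x e^(-W_0(x)) and |W_0(x)| <= e |x| show that
   W_0(tau q(tau)) / tau -> q_0 whenever q(tau) -> q_0, while W_(-1) <= -1
   forces Sigma_(-1)(tau) <= -1/tau - |a|. *)

Definition xexp (y : R) : R := y * exp y.

Lemma exp_le_mono x y : x <= y -> exp x <= exp y.
Proof. intros [Hlt | ->]; [left; apply exp_increasing | right]; auto. Qed.

Lemma exp_opp_mul x : exp (- x) * exp x = 1.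
Proof. rewrite exp_Ropp. field. apply Rgt_not_eq, exp_pos. Qed.

(* f is strictly increasing on [-1, oo): with b = a + d, the sign of
   f b - f a is that of (a + d) e^d - a, positive by 1 + d < e^d. *)
Lemma xexp_strict_incr a b : -1 <= a -> a < b -> xexp a < xexp b.
Proof.
  intros Ha Hab. unfold xexp.
  set (d := b - a). replace b with (a + d) by (unfold d; ring).
  assert (Hd : 0 < d) by (unfold d; lra).
  rewrite exp_plus.
  assert (E1 := exp_ineq1 d ltac:(lra)).
  assert (E2 := exp_ineq1 (- d) ltac:(lra)).
  assert (E3 := exp_opp_mul d).
  assert (Ea := exp_pos a). assert (Ed := exp_pos d).
  assert (K : 0 < (a + d) * exp d - a).
  { assert (0 < 1 + (d - 1) * exp d) by nra. nra. }
  nra.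
Qed.

Lemma xexp_strict_decr a b : a < b -> b <= -1 -> xexp b < xexp a.
Proof.
  intros Hab Hb. unfold xexp.
  set (d := b - a). replace b with (a + d) by (unfold d; ring).
  assert (Hd : 0 < d) by (unfold d; lra).
  assert (Hb' : a + d <= -1) by (unfold d; lra).
  rewrite exp_plus.
  assert (E1 := exp_ineq1 d ltac:(lra)).
  assert (Ea := exp_pos a). assert (Ed := exp_pos d).
  assert (K : (a + d) * exp d - a < 0) by nra.
  nra.
Qed.

Lemma xexp_m1 : xexp (-1) = - / exp 1.
Proof. unfold xexp. replace (-1) with (- (1)) by ring. rewrite exp_Ropp. ring. Qed.

Lemma xexp_ivt lo hi x :
  lo <= hi -> (xexp lo - x) * (xexp hi - x) <= 0 ->
  exists y, lo <= y <= hi /\ xexp y = x.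
Proof.
  intros Hlh Hsign.
  assert (Hc : continuity (fun y => xexp y - x)) by (unfold xexp; reg).
  destruct (IVT_cor _ _ _ Hc Hlh Hsign) as [y [Hy Hy0]].
  exists y. split; [exact Hy | lra].
Qed.

(* f tends to 0 at -oo, so it exceeds any negative value far to the left. *)
Lemma xexp_far_left x : x < 0 -> exists y, y <= -1 /\ x < xexp y.
Proof.
  intros Hx.
  destruct (proj1 (filterlim_locally _ _) is_lim_mul_exp_m
              (mkposreal (- x) ltac:(lra))) as [M HM].
  set (y := Rmin (M - 1) (-1)).
  assert (Hy : y <= -1) by apply Rmin_r.
  assert (HyM : y < M) by (pose proof (Rmin_l (M - 1) (-1)); unfold y in *; lra).
  exists y. split; [exact Hy |].
  specialize (HM y HyM). change (Rabs (xexp y - 0) < - x) in HM.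
  apply Rabs_def2 in HM. lra.
Qed.

Lemma W0_spec x : - / exp 1 <= x -> -1 <= W0 x /\ xexp (W0 x) = x.
Proof.
  intros Hx. unfold W0. apply epsilon_spec.
  assert (Habs := Rabs_pos x). assert (Hle := Rle_abs x).
  assert (He : 1 <= exp (Rabs x)) by (rewrite <- exp_0; apply exp_le_mono; lra).
  destruct (xexp_ivt (-1) (Rabs x) x) as [y [Hy Hxy]].
  - lra.
  - rewrite xexp_m1. unfold xexp.
    assert (0 <= Rabs x * exp (Rabs x) - x) by nra. nra.
  - exists y. split; [lra | exact Hxy].
Qed.

Lemma Wm1_spec x : - / exp 1 <= x < 0 -> Wm1 x <= -1 /\ xexp (Wm1 x) = x.
Proof.
  intros [Hx Hx0]. unfold Wm1. apply epsilon_spec.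
  destruct (xexp_far_left x Hx0) as [y0 [Hy0 Hfy0]].
  destruct (xexp_ivt y0 (-1) x) as [y [Hy Hxy]].
  - exact Hy0.
  - rewrite xexp_m1. nra.
  - exists y. split; [lra | exact Hxy].
Qed.

Lemma le_W0 x v : - / exp 1 <= x -> xexp v <= x -> v <= W0 x.
Proof.
  intros Hx Hv. destruct (W0_spec x Hx) as [Hm1 HW].
  destruct (Rle_or_lt v (W0 x)) as [Hle | Hlt]; [exact Hle |].
  pose proof (xexp_strict_incr _ _ Hm1 Hlt). lra.
Qed.

Lemma outside_Wm1_W0 x v :
  - / exp 1 <= x < 0 -> x <= xexp v -> v <= Wm1 x \/ W0 x <= v.
Proof.
  intros Hx Hv.
  destruct (W0_spec x (proj1 Hx)) as [HW0m1 HW0].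
  destruct (Wm1_spec x Hx) as [HWm1m1 HWm1].
  destruct (Rle_or_lt v (Wm1 x)) as [Hle | Hgt]; [left; exact Hle |].
  destruct (Rle_or_lt (W0 x) v) as [Hge | Hlt]; [right; exact Hge |].
  exfalso. destruct (Rle_or_lt v (-1)) as [Hv1 | Hv1].
  - pose proof (xexp_strict_decr _ _ Hgt Hv1). lra.
  - pose proof (xexp_strict_incr v (W0 x) ltac:(lra) Hlt). lra.
Qed.

Lemma Cmod_cexp u : Cmod (cexp u) = exp (Re u).
Proof.
  unfold Cmod, cexp; cbn [fst snd].
  replace ((exp (Re u) * cos (Im u)) ^ 2 + (exp (Re u) * sin (Im u)) ^ 2)
    with (exp (Re u) ^ 2).
  - apply sqrt_pow2. left; apply exp_pos.
  - pose proof (sin2_cos2 (Im u)) as Hsc. unfold Rsqr in Hsc. nra.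
Qed.

(* Real part of a root: |Re z + Re a| = |Re (w e^(-tau z))| <= |w| e^(-tau Re z). *)
Lemma root_real_part_bound (a w z : C) (tau : R) :
  (z + a - w * cexp (- (RtoC tau * z)))%C = 0%C ->
  Rabs (Re z + Re a) <= Cmod w * exp (- (tau * Re z)).
Proof.
  intros Hroot.
  assert (E : (z + a)%C = (w * cexp (- (RtoC tau * z)))%C).
  { destruct z as [z1 z2], a as [a1 a2], w as [w1 w2].
    unfold cexp in *. simpl in *. injection Hroot; intros.
    apply injective_projections; simpl; lra. }
  change (Re z + Re a) with (Re (z + a)%C).
  eapply Rle_trans; [apply re_le_Cmod |].
  rewrite E, Cmod_mult, Cmod_cexp. right. do 2 f_equal.
  destruct z; simpl; ring.
Qed.

Lemma xexp_bounds_of_root_bound t X A B r :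
  0 < t -> Rabs r <= A -> Rabs (X + r) <= B * exp (- (t * X)) ->
  xexp (t * (X - A)) <= t * B * exp (- t * A) /\
  - t * B * exp (t * A) <= xexp (t * (X + A)).
Proof.
  intros Ht Hr HX.
  apply Rabs_le_between in Hr. apply Rabs_le_between in HX.
  assert (Eu := exp_opp_mul (t * X)).
  assert (Pu := exp_pos (t * X)).
  assert (Pm := exp_pos (- t * A)). assert (Pp := exp_pos (t * A)).
  assert (HB : B = B * exp (- (t * X)) * exp (t * X))
    by (rewrite Rmult_assoc, Eu; ring).
  assert (Hup : (X - A) * exp (t * X) <= B).
  { rewrite HB. apply Rmult_le_compat_r; lra. }
  assert (Hlow : - (X + A) * exp (t * X) <= B).
  { rewrite HB. apply Rmult_le_compat_r; lra. }
  unfold xexp.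
  replace (exp (t * (X - A))) with (exp (t * X) * exp (- t * A))
    by (rewrite <- exp_plus; f_equal; ring).
  replace (exp (t * (X + A))) with (exp (t * X) * exp (t * A))
    by (rewrite <- exp_plus; f_equal; ring).
  split.
  - replace (t * (X - A) * (exp (t * X) * exp (- t * A)))
      with (t * ((X - A) * exp (t * X)) * exp (- t * A)) by ring.
    apply Rmult_le_compat_r; [lra |]. apply Rmult_le_compat_l; lra.
  - replace (t * (X + A) * (exp (t * X) * exp (t * A)))
      with (- (t * (- (X + A) * exp (t * X)) * exp (t * A))) by ring.
    replace (- t * B * exp (t * A)) with (- (t * B * exp (t * A))) by ring.
    apply Ropp_le_contravar, Rmult_le_compat_r; [lra |].
    apply Rmult_le_compat_l; lra.
Qed.

Lemma le_inv_mul t u W : 0 < t -> t * u <= W -> u <= / t * W.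
Proof.
  intros Ht H. apply Rmult_le_reg_l with t; [exact Ht |].
  replace (t * (/ t * W)) with W by (field; lra). exact H.
Qed.

Lemma inv_mul_le t u W : 0 < t -> W <= t * u -> / t * W <= u.
Proof.
  intros Ht H. apply Rmult_le_reg_l with t; [exact Ht |].
  replace (t * (/ t * W)) with W by (field; lra). exact H.
Qed.

Lemma root_localization (a w z : C) (tau : R) :
  0 < tau -> 0 < tau * Cmod w * exp (tau * Cmod a) <= / exp 1 ->
  (z + a - w * cexp (- (RtoC tau * z)))%C = 0%C ->
  Re z <= Sigmam1 a w tau \/
  (Sigma0m a w tau <= Re z /\ Re z <= Sigma0p a w tau).
Proof.
  intros Ht Hsmall Hroot. unfold Sigmam1, Sigma0m, Sigma0p.
  set (A := Cmod a) in *. set (B := Cmod w) in *.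
  assert (Ha : Rabs (Re a) <= A) by apply re_le_Cmod.
  destruct (xexp_bounds_of_root_bound tau (Re z) A B (Re a) Ht Ha
              (root_real_part_bound a w z tau Hroot)) as [Hup Hlow].
  assert (Hpos : 0 <= tau * B * exp (- tau * A)).
  { assert (0 <= B) by apply Cmod_ge_0.
    pose proof (exp_pos (- tau * A)). apply Rmult_le_pos; [nra | lra]. }
  assert (He : 0 < / exp 1) by (apply Rinv_0_lt_compat, exp_pos).
  assert (Hupper : Re z <= / tau * W0 (tau * B * exp (- tau * A)) + A).
  { assert (Hdom : - / exp 1 <= tau * B * exp (- tau * A)) by lra.
    pose proof (le_inv_mul _ _ _ Ht (le_W0 _ _ Hdom Hup)). lra. }
  assert (Hdom : - / exp 1 <= - tau * B * exp (tau * A) < 0) by lra.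
  destruct (outside_Wm1_W0 _ _ Hdom Hlow) as [Hv | Hv].
  - left. pose proof (le_inv_mul _ _ _ Ht Hv). lra.
  - right. pose proof (inv_mul_le _ _ _ Ht Hv). lra.
Qed.

Lemma small_tau A B : 0 <= A -> 0 < B ->
  exists tau0, 0 < tau0 /\
    forall tau, 0 < tau < tau0 -> 0 < tau * B * exp (tau * A) < / exp 1.
Proof.
  intros HA HB.
  assert (Ee := exp_pos 1).
  assert (HK : 0 < B * exp A) by (apply Rmult_lt_0_compat; [lra | apply exp_pos]).
  exists (Rmin 1 (/ (exp 1 * (B * exp A)))). split.
  { apply Rmin_pos; [lra |]. apply Rinv_0_lt_compat, Rmult_lt_0_compat; lra. }
  intros tau [H1 H2].
  assert (H3 : tau < 1) by (pose proof (Rmin_l 1 (/ (exp 1 * (B * exp A)))); lra).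
  assert (H4 : tau < / (exp 1 * (B * exp A)))
    by (pose proof (Rmin_r 1 (/ (exp 1 * (B * exp A)))); lra).
  assert (H5 : exp (tau * A) <= exp A) by (apply exp_le_mono; nra).
  assert (H6 := exp_pos (tau * A)).
  split; [apply Rmult_lt_0_compat; [apply Rmult_lt_0_compat |]; lra |].
  apply Rle_lt_trans with (tau * (B * exp A)).
  { rewrite Rmult_assoc. apply Rmult_le_compat_l; [lra |].
    apply Rmult_le_compat_l; lra. }
  replace (/ exp 1) with (/ (exp 1 * (B * exp A)) * (B * exp A)) by (field; lra).
  apply Rmult_lt_compat_r; lra.
Qed.

Lemma lim_plus {T} {F : (T -> Prop) -> Prop} {FF : Filter F}
  (f g : T -> R) (lf lg : R) :
  filterlim f F (locally lf) -> filterlim g F (locally lg) ->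
  filterlim (fun t => f t + g t) F (locally (lf + lg)).
Proof.
  intros Hf Hg.
  exact (filterlim_comp_2 f g Rplus Hf Hg
           (filterlim_plus (K := R_AbsRing) (V := R_NormedModule) lf lg)).
Qed.

Lemma lim_mult {T} {F : (T -> Prop) -> Prop} {FF : Filter F}
  (f g : T -> R) (lf lg : R) :
  filterlim f F (locally lf) -> filterlim g F (locally lg) ->
  filterlim (fun t => f t * g t) F (locally (lf * lg)).
Proof.
  intros Hf Hg.
  exact (filterlim_comp_2 f g Rmult Hf Hg (filterlim_mult (K := R_AbsRing) lf lg)).
Qed.

Lemma lim_right_of_continuous (f : R -> R) :
  continuous f 0 -> filterlim f (at_right 0) (locally (f 0)).
Proof. apply filterlim_filter_le_1, filter_le_within. Qed.

Lemma W0_abs_le x : - / exp 1 <= x -> Rabs (W0 x) <= exp 1 * Rabs x.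
Proof.
  intros Hx. destruct (W0_spec x Hx) as [Hm1 HW].
  set (y := W0 x) in *. rewrite <- HW. unfold xexp.
  assert (Ey := exp_pos y). assert (E1 := exp_pos 1).
  rewrite Rabs_mult, (Rabs_right (exp y)) by lra.
  destruct (Rle_or_lt 0 y) as [Hy | Hy].
  - rewrite Rabs_right by lra.
    assert (1 <= exp y) by (pose proof (exp_ineq1_le y); lra).
    assert (1 < exp 1) by (pose proof (exp_ineq1 1 ltac:(lra)); lra).
    assert (0 <= y * exp y - y) by nra. nra.
  - rewrite Rabs_left by lra.
    assert (Hy1 : exp (- (1)) <= exp y) by (apply exp_le_mono; lra).
    assert (exp 1 * exp y >= 1) by (pose proof (exp_opp_mul 1); nra).
    nra.
Qed.

Lemma W0_lim_0 {T} {F : (T -> Prop) -> Prop} {FF : Filter F} (g : T -> R) :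
  filterlim g F (locally 0) -> filterlim (fun t => W0 (g t)) F (locally 0).
Proof.
  intros Hg. apply filterlim_locally. intros eps.
  assert (E1 := exp_pos 1).
  assert (He : 0 < Rmin (eps / exp 1) (/ exp 1)).
  { apply Rmin_pos; [apply Rdiv_lt_0_compat; [apply cond_pos | lra]|].
    apply Rinv_0_lt_compat; lra. }
  apply filter_imp with (2 := proj1 (filterlim_locally _ _) Hg (mkposreal _ He)).
  intros t Ht. change (Rabs (g t - 0) < Rmin (eps / exp 1) (/ exp 1)) in Ht.
  change (Rabs (W0 (g t) - 0) < eps). rewrite Rminus_0_r in *.
  pose proof (Rmin_l (eps / exp 1) (/ exp 1)).
  pose proof (Rmin_r (eps / exp 1) (/ exp 1)).
  assert (Hdom : - / exp 1 <= g t) by (apply Rabs_def2 in Ht; lra).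
  apply Rle_lt_trans with (1 := W0_abs_le _ Hdom).
  replace (pos eps) with (exp 1 * (eps / exp 1)) by (field; lra).
  apply Rmult_lt_compat_l; lra.
Qed.

(* W0 x / x -> 1 as x -> 0, in the scaled form needed for Sigma0+-:
   W0(t q(t)) / t = q(t) e^(-W0(t q(t))) -> q0 e^0. *)
Lemma W0_scaled_lim (q : R -> R) (q0 : R) :
  filterlim q (at_right 0) (locally q0) ->
  filterlim (fun t => / t * W0 (t * q t)) (at_right 0) (locally q0).
Proof.
  intros Hq.
  assert (Hp : filterlim (fun t => t * q t) (at_right 0) (locally 0)).
  { replace 0 with (0 * q0) at 2 by ring.
    exact (lim_mult _ _ _ _ (lim_right_of_continuous _ (continuous_id 0)) Hq). }
  assert (Hexp : filterlim (fun t => exp (- W0 (t * q t))) (at_right 0) (locally 1)).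
  { rewrite <- exp_0. replace 0 with (- 0) at 2 by ring.
    apply (filterlim_comp _ _ _ (fun t => W0 (t * q t)) (fun x => exp (- x)) _
             (locally 0) _ (W0_lim_0 _ Hp)).
    apply continuous_exp_comp, (continuous_opp (fun x : R => x)), continuous_id. }
  assert (Hdom : at_right 0 (fun t => 0 < t /\ - / exp 1 <= t * q t)).
  { assert (E1 := exp_pos 1).
    apply filter_and; [exact (filter_forall (F := locally 0) _ (fun t Ht => Ht)) |].
    apply filter_imp with
      (2 := proj1 (filterlim_locally _ _) Hp
              (mkposreal _ (Rinv_0_lt_compat _ E1))).
    intros t Ht. change (Rabs (t * q t - 0) < / exp 1) in Ht.
    apply Rabs_def2 in Ht. lra. }
  replace q0 with (q0 * 1) by ring.
  apply filterlim_ext_loc with (2 := lim_mult _ _ _ _ Hq Hexp).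
  apply filter_imp with (2 := Hdom). intros t [Ht Hd].
  destruct (W0_spec _ Hd) as [_ HW]. unfold xexp in HW.
  set (y := W0 (t * q t)) in *.
  assert (Hqt : q t = / t * (y * exp y)) by (rewrite HW; field; lra).
  rewrite Hqt. replace (/ t * (y * exp y) * exp (- y))
    with (/ t * y * (exp (- y) * exp y)) by ring.
  rewrite exp_opp_mul. ring.
Qed.

Lemma lim_right_scaled_exp (c k : R) :
  filterlim (fun t => c * exp (t * k)) (at_right 0) (locally c).
Proof.
  assert (Hc : continuous (fun t => c * exp (t * k)) 0).
  { apply (continuous_mult (fun _ => c)); [apply continuous_const |].
    apply continuous_exp_comp, (continuous_mult (fun t => t) (fun _ => k)).
    - apply continuous_id.
    - apply continuous_const. }
  pose proof (lim_right_of_continuous _ Hc) as Hlim. cbv beta in Hlim.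
  now rewrite Rmult_0_l, exp_0, Rmult_1_r in Hlim.
Qed.

Lemma Sigma0p_lim (a w : C) :
  filterlim (Sigma0p a w) (at_right 0) (locally (Cmod a + Cmod w)).
Proof.
  set (A := Cmod a). set (B := Cmod w).
  assert (Hq := lim_right_scaled_exp B (- A)).
  rewrite Rplus_comm.
  apply (filterlim_ext (fun t => / t * W0 (t * (B * exp (t * - A))) + A)).
  { intros t. unfold Sigma0p. fold A B.
    replace (t * - A) with (- t * A) by ring. now rewrite <- Rmult_assoc. }
  exact (lim_plus _ _ _ _ (W0_scaled_lim _ _ Hq) (filterlim_const A)).
Qed.

Lemma Sigma0m_lim (a w : C) :
  filterlim (Sigma0m a w) (at_right 0) (locally (- (Cmod a + Cmod w))).
Proof.
  set (A := Cmod a). set (B := Cmod w).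
  assert (Hq := lim_right_scaled_exp (- B) A).
  replace (- (A + B)) with (- B + - A) by ring.
  apply (filterlim_ext (fun t => / t * W0 (t * (- B * exp (t * A))) + - A)).
  { intros t. unfold Sigma0m. fold A B.
    replace (t * (- B * exp (t * A))) with (- t * B * exp (t * A)) by ring.
    ring. }
  exact (lim_plus _ _ _ _ (W0_scaled_lim _ _ Hq) (filterlim_const (- A))).
Qed.

(* Since W_(-1) <= -1, Sigma_(-1)(tau) <= -1/tau - |a| once the argument of
   W_(-1) lies in [-1/e, 0). *)
Lemma Sigmam1_lim (a w : C) (hw : w <> 0%C) :
  filterlim (Sigmam1 a w) (at_right 0) (Rbar_locally m_infty).
Proof.
  set (A := Cmod a). set (B := Cmod w).
  assert (HA : 0 <= A) by apply Cmod_ge_0.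
  assert (HB : 0 < B) by (apply Cmod_gt_0; exact hw).
  destruct (small_tau A B HA HB) as [tau0 [Htau0 Hsmall]].
  apply (filterlim_le_m_infty (fun t => - / t - A)).
  - exists (mkposreal tau0 Htau0). intros t Hball Ht.
    change (Rabs (t - 0) < tau0) in Hball.
    rewrite Rminus_0_r, Rabs_right in Hball by lra.
    destruct (Hsmall t (conj Ht Hball)) as [Hpos Hlt].
    destruct (Wm1_spec (- t * B * exp (t * A))) as [Hm1 _]; [lra |].
    unfold Sigmam1. fold A B.
    assert (Hinv : 0 <= / t) by (left; apply Rinv_0_lt_compat; exact Ht).
    pose proof (Rmult_le_compat_l _ _ _ Hinv Hm1). lra.
  - apply (filterlim_comp _ _ _ Rinv (fun x => - x - A) _ (Rbar_locally p_infty)).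
    + exact filterlim_Rinv_0_right.
    + intros P [M HM]. exists (- M - A). intros x Hx. apply HM. lra.
Qed.

Theorem mainTheorem3 (a w : C) (hw : w <> 0%C) :
  (exists tau0 : R, 0 < tau0 /\
     forall tau : R, 0 < tau < tau0 ->
       0 < tau * Cmod w * exp (tau * Cmod a) < / exp 1 /\
       forall z : C, (z + a - w * cexp (- (RtoC tau * z)))%C = 0%C ->
         Re z <= Sigmam1 a w tau \/
         (Sigma0m a w tau <= Re z /\ Re z <= Sigma0p a w tau)) /\
  filterlim (Sigma0p a w) (at_right 0) (locally (Cmod a + Cmod w)) /\
  filterlim (Sigma0m a w) (at_right 0) (locally (- (Cmod a + Cmod w))) /\
  filterlim (Sigmam1 a w) (at_right 0) (Rbar_locally m_infty).
Proof.
  split; [| split; [| split]].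
  2: apply Sigma0p_lim.
  2: apply Sigma0m_lim.
  2: apply Sigmam1_lim, hw.
  destruct (small_tau (Cmod a) (Cmod w) (Cmod_ge_0 a) (proj1 (Cmod_gt_0 w) hw))
    as [tau0 [Htau0 Hsmall]].
  exists tau0. split; [exact Htau0 |].
  intros tau Htau. pose proof (Hsmall tau Htau) as Hadm.
  split; [exact Hadm |].
  intros z Hroot. apply root_localization; [lra | lra | exact Hroot].
Qed.
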